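(* Let $r_o>0$, $\tau>0$, $\alpha>0$ and $\beta\in(0,1]$ be constants. For $m<0$, let $u_m:[0,\infty)\to[r_o,\infty)$ be the solution of $$u_m(0)=r_o,\qquad u_m'(s)=\left(1-\frac{2m}{u_m(s)}\right)^{1/2},$$ and set $k=\tau(1-2m/r_o)^{-1/2}$. For $m$ sufficiently negative (so that $\beta>(1+\alpha/2)k^2$), let $A_o(m)$ be the smallest positive root $A$ of $$\beta-k^2-\frac\alpha2A^{-2}u_m^2(Ak)=0.$$ Let $\theta>0$ be the unique positive root of $\theta^3-\frac{3\tau}{2}\left(\frac{\alpha}{2\beta}\right)^{1/2}\theta^2-1=0$. Then $$\lim_{m\to-\infty}A_o(m)=r_o\theta^2\left(\frac{\alpha}{2\beta}\right)^{1/2},\qquad \lim_{m\to-\infty}u_m(A_o(m)k)=r_o\theta^2.$$ *)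

From Stdlib Require Import Reals.
Open Scope R_scope.

(* u : [0,oo) -> [r_o,oo) solves u(0) = r_o, u'(s) = (1 - 2m/u(s))^(1/2).
   Realised as a total function R -> R; only its values on [0,oo) matter.
   The derivative is required on (0,oo) and u is right-continuous at 0. *)
Definition is_um (ro m : R) (u : R -> R) : Prop :=
  u 0 = ro /\
  (forall s, 0 <= s -> ro <= u s) /\
  (forall eps, 0 < eps -> exists delta, 0 < delta /\
      forall s, 0 <= s < delta -> Rabs (u s - ro) < eps) /\
  (forall s, 0 < s -> derivable_pt_lim u s (sqrt (1 - 2 * m / u s))).

Definition kk (ro tau m : R) : R := tau / sqrt (1 - 2 * m / ro).

Definition smallest_pos_root (f : R -> R) (A : R) : Prop :=
  0 < A /\ f A = 0 /\ (forall B, 0 < B < A -> f B <> 0).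

(* Along a solution, [d/ds (2/3) u(s)^(3/2) = sqrt (u(s) - 2m)], which lies between [sqrt (-2m)]
   and [sqrt (-2m) + sqrt (u(s))].  At a root [A] of the defining equation,
   [A = u(Ak) sqrt (alpha / (2 (beta - k^2)))]; integrating over [[0, Ak]] and writing
   [u(Ak) = r_o t^2] yields [P t^2 <= t^3 - 1 <= P t^2 + Q t^3], where, with
   [k^2 = tau^2 z] and [z = (1 - 2m/r_o)^(-1) -> 0], we have
   [P -> (3 tau / 2) sqrt (alpha / (2 beta))] and [Q -> 0] as [m -> -oo].
   Since [1 - a/t - 1/t^3] is increasing in [t] for [a >= 0], this squeezes [t] onto [theta].
   Only the fact that [A_o(m)] is a positive root is used, not its minimality. *)

From Stdlib Require Import Reals Lra.
From Coquelicot Require Import Coquelicot.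
Open Scope R_scope.

Lemma MVT_le (f df : R -> R) (a b : R) : a <= b ->
  (forall x, a < x < b -> is_derive f x (df x)) ->
  (forall x, a <= x <= b -> continuity_pt f x) ->
  exists c, a <= c <= b /\ f b - f a = df c * (b - a).
Proof.
  intros Hab Hd Hc.
  destruct (MVT_gen f a b df) as [c Hcab].
  - rewrite Rmin_left, Rmax_right by lra; exact Hd.
  - rewrite Rmin_left, Rmax_right by lra; exact Hc.
  - exists c; rewrite Rmin_left, Rmax_right in Hcab by lra; exact Hcab.
Qed.

Lemma sqrt_plus_le (a b : R) : 0 <= a -> 0 <= b -> sqrt (a + b) <= sqrt a + sqrt b.
Proof.
  intros Ha Hb.
  rewrite <- (sqrt_square (sqrt a + sqrt b)) by (generalize (sqrt_pos a) (sqrt_pos b); lra).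
  apply sqrt_le_1_alt.
  generalize (sqrt_sqrt a Ha) (sqrt_sqrt b Hb) (Rmult_le_pos _ _ (sqrt_pos a) (sqrt_pos b)); nra.
Qed.

Section Solution.

Variables (ro m : R) (u : R -> R).
Hypotheses (Hro : 0 < ro) (Hm : m < 0) (Hu : is_um ro m u).

(* [u] is only specified on [[0, +oo)]; extended by [u 0] to the left it is continuous at [0]. *)
Let w (x : R) : R := u (Rmax 0 x).

Let w_ge x : ro <= w x.
Proof. apply Hu, Rmax_l. Qed.

Let w_derive x : 0 < x -> is_derive w x (sqrt (1 - 2 * m / w x)).
Proof.
  intros Hx; unfold w at 2; rewrite Rmax_right by lra.
  apply is_derive_ext_loc with u.
  - exists (mkposreal x Hx); intros y Hy.
    change (Rabs (y - x) < x) in Hy; apply Rabs_def2 in Hy.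
    unfold w; rewrite Rmax_right by lra; reflexivity.
  - apply is_derive_Reals, Hu, Hx.
Qed.

Let w_continuous x : 0 <= x -> continuity_pt w x.
Proof.
  intros [Hx | <-].
  - apply derivable_continuous_pt; eexists; apply is_derive_Reals, w_derive, Hx.
  - destruct Hu as [H0 [_ [Hc _]]].
    intros eps Heps; destruct (Hc eps Heps) as [d [Hd Hclose]].
    exists d; split; [exact Hd |]; intros y [_ Hy]; simpl in *; unfold R_dist in *.
    unfold w; rewrite (Rmax_left 0 0), H0 by lra.
    destruct (Rle_dec 0 y).
    + rewrite Rmax_right by lra; apply Hclose; rewrite Rminus_0_r, Rabs_right in Hy by lra; lra.
    + rewrite Rmax_left, H0, Rminus_eq_0, Rabs_R0 by lra; exact Heps.
Qed.

Lemma is_um_le a b : 0 <= a <= b -> u a <= u b.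
Proof.
  intros Hab.
  destruct (MVT_le w (fun x => sqrt (1 - 2 * m / w x)) a b) as [c [_ Hc]].
  - lra.
  - intros x Hx; apply w_derive; lra.
  - intros x Hx; apply w_continuous; lra.
  - generalize (Rmult_le_pos _ (b - a) (sqrt_pos (1 - 2 * m / w c)) ltac:(lra)).
    unfold w in Hc |- *; rewrite !(Rmax_right 0) in Hc by lra; lra.
Qed.

Let w_cube_derive x : 0 < x ->
  is_derive (fun y => sqrt (w y) ^ 3) x (3 / 2 * sqrt (w x - 2 * m)).
Proof.
  intros Hx.
  assert (Hw : 0 < w x) by (generalize (w_ge x); lra).
  assert (Hs : 0 < sqrt (w x)) by (apply sqrt_lt_R0, Hw).
  assert (Hq : 0 <= 1 - 2 * m / w x) by (unfold Rdiv; generalize (Rinv_0_lt_compat _ Hw); nra).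
  assert (Hd : is_derive (fun y => sqrt (w y) ^ 3) x
    (INR 3 * (sqrt (1 - 2 * m / w x) * / (2 * sqrt (w x))) * sqrt (w x) ^ 2)).
  { apply (is_derive_pow (fun y => sqrt (w y)) 3), (is_derive_comp sqrt w x), w_derive, Hx.
    apply is_derive_Reals, derivable_pt_lim_sqrt, Hw. }
  replace (w x - 2 * m) with ((1 - 2 * m / w x) * w x) by (field; lra).
  rewrite sqrt_mult_alt by exact Hq.
  replace (3 / 2 * (sqrt (1 - 2 * m / w x) * sqrt (w x)))
    with (INR 3 * (sqrt (1 - 2 * m / w x) * / (2 * sqrt (w x))) * sqrt (w x) ^ 2)
    by (simpl; field; lra).
  exact Hd.
Qed.

Lemma is_um_cube_bounds s : 0 < s ->
  sqrt (-2 * m) * s <= 2 / 3 * (sqrt (u s) ^ 3 - sqrt ro ^ 3)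
                   <= (sqrt (-2 * m) + sqrt (u s)) * s.
Proof.
  intros Hs.
  destruct (MVT_le (fun y => sqrt (w y) ^ 3) (fun y => 3 / 2 * sqrt (w y - 2 * m)) 0 s)
    as [c [Hc Hinc]].
  - lra.
  - intros x Hx; apply w_cube_derive; lra.
  - intros x Hx.
    apply (continuity_pt_comp (fun y => sqrt (w y)) (fun v => v ^ 3));
      [| apply derivable_continuous, derivable_pow].
    apply (continuity_pt_comp w sqrt);
      [apply w_continuous; lra | apply continuity_pt_sqrt; generalize (w_ge x); lra].
  - assert (Hw0 : w 0 = ro) by (unfold w; rewrite Rmax_left by lra; apply Hu).
    assert (Hws : w s = u s) by (unfold w; rewrite Rmax_right by lra; reflexivity).
    assert (Hwc : w c <= u s) by (unfold w; rewrite Rmax_right by lra; apply is_um_le; lra).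
    assert (Hlo : sqrt (-2 * m) <= sqrt (w c - 2 * m))
      by (apply sqrt_le_1_alt; generalize (w_ge c); lra).
    assert (Hhi : sqrt (w c - 2 * m) <= sqrt (-2 * m) + sqrt (u s)).
    { eapply Rle_trans; [apply sqrt_le_1_alt with (y := -2 * m + u s); lra |].
      apply sqrt_plus_le; generalize (w_ge s); lra. }
    rewrite Hw0, Hws, Rminus_0_r in Hinc; rewrite Hinc.
    split; nra.
Qed.

End Solution.

Definition cubic_squeeze (P Q t : R) : Prop :=
  1 <= t /\ P * t ^ 2 <= t ^ 3 - 1 <= P * t ^ 2 + Q * t ^ 3.

(* [(x ^ 3 - a x ^ 2 - 1) / x ^ 3]: unlike the cubic, it is increasing on [(0, +oo)]. *)
Definition cubic_defect (a x : R) : R := 1 - a / x - / x ^ 3.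

Lemma cubic_defect_lt (a x y : R) : 0 <= a -> 0 < x < y ->
  cubic_defect a x < cubic_defect a y.
Proof.
  intros Ha Hxy; unfold cubic_defect, Rdiv; rewrite <- !pow_inv.
  assert (Hinv : / y < / x) by (apply Rinv_lt_contravar; nra).
  assert (Hy : 0 < / y) by (apply Rinv_0_lt_compat; lra).
  assert (Hsq : / y * / y < / x * / x) by nra.
  assert (Hcube : (/ y) ^ 3 < (/ x) ^ 3) by (simpl; nra).
  nra.
Qed.

Lemma cubic_defect_lt_inv (a x y : R) : 0 <= a -> 0 < x -> 0 < y ->
  cubic_defect a x < cubic_defect a y -> x < y.
Proof.
  intros Ha Hx Hy Hlt.
  destruct (Rlt_or_le x y) as [| [Hyx | ->]]; [assumption | | lra].
  generalize (cubic_defect_lt a y x Ha (conj Hy Hyx)); lra.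
Qed.

Lemma cubic_defect_root (a th : R) : 0 < th -> th ^ 3 - a * th ^ 2 - 1 = 0 ->
  cubic_defect a th = 0.
Proof.
  intros Hth Hroot; unfold cubic_defect.
  replace (1 - a / th - / th ^ 3) with ((th ^ 3 - a * th ^ 2 - 1) / th ^ 3) by (field; lra).
  rewrite Hroot; unfold Rdiv; ring.
Qed.

Lemma cubic_defect_bound (a P Q t : R) : cubic_squeeze P Q t ->
  Rabs (cubic_defect a t) <= Rabs (P - a) + Rabs Q.
Proof.
  intros [Ht Hsq].
  set (v := / t).
  assert (Hv : t * v = 1) by (unfold v; field; lra).
  assert (Hv0 : 0 < v) by (apply Rinv_0_lt_compat; lra).
  assert (Hv1 : v <= 1) by nra.
  assert (Hv3 : 0 < v ^ 3 <= 1) by (simpl; split; nra).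
  replace (cubic_defect a t) with ((t ^ 3 - 1 - P * t ^ 2) * v ^ 3 + (P - a) * v)
    by (unfold cubic_defect, v; field; lra).
  assert (Hgap : 0 <= (t ^ 3 - 1 - P * t ^ 2) * v ^ 3 <= Q)
    by (replace Q with (Q * t ^ 3 * v ^ 3) by (unfold v; field; lra); split; nra).
  eapply Rle_trans; [apply Rabs_triang |]; rewrite Rplus_comm, Rabs_mult, (Rabs_right v) by lra.
  apply Rplus_le_compat; [generalize (Rabs_pos (P - a)); nra |].
  rewrite Rabs_right by lra; generalize (Rle_abs Q); lra.
Qed.

Lemma filterlim_cubic_root {T : Type} {F : (T -> Prop) -> Prop} {FF : Filter F}
  (a th : R) (P Q t : T -> R) :
  0 <= a -> 0 < th -> th ^ 3 - a * th ^ 2 - 1 = 0 ->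
  filterlim P F (locally a) -> filterlim Q F (locally 0) ->
  F (fun x => cubic_squeeze (P x) (Q x) (t x)) ->
  filterlim t F (locally th).
Proof.
  intros Ha Hth Hroot HP HQ Hsq.
  apply cubic_defect_root in Hroot; [| exact Hth].
  apply filterlim_locally; intros [eps Heps]; simpl.
  set (e := Rmin eps (th / 2)).
  assert (He : 0 < e <= eps /\ e <= th / 2)
    by (unfold e; repeat split; [apply Rmin_glb_lt; lra | apply Rmin_l | apply Rmin_r]).
  set (d := Rmin (cubic_defect a (th + e)) (- cubic_defect a (th - e))).
  assert (Hd : 0 < d / 2).
  { enough (0 < d) by lra; apply Rmin_glb_lt.
    - rewrite <- Hroot; apply cubic_defect_lt; lra.
    - enough (cubic_defect a (th - e) < cubic_defect a th) by lra.
      apply cubic_defect_lt; lra. }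
  generalize (filter_and _ _ Hsq (filter_and _ _
    (proj1 (filterlim_locally _ _) HP (mkposreal _ Hd))
    (proj1 (filterlim_locally _ _) HQ (mkposreal _ Hd)))).
  apply filter_imp; intros x [Hsqx [HPx HQx]].
  change (Rabs (P x - a) < d / 2) in HPx; change (Rabs (Q x - 0) < d / 2) in HQx.
  rewrite Rminus_0_r in HQx.
  assert (Hdef := cubic_defect_bound a _ _ _ Hsqx).
  assert (Ht1 : 1 <= t x) by apply Hsqx.
  assert (Hsmall : Rabs (cubic_defect a (t x)) < d) by lra.
  apply Rabs_def2 in Hsmall.
  assert (Hup : d <= cubic_defect a (th + e)) by apply Rmin_l.
  assert (Hlow : d <= - cubic_defect a (th - e)) by apply Rmin_r.
  change (Rabs (t x - th) < eps); apply Rabs_def1.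
  - enough (t x < th + e) by lra.
    apply (cubic_defect_lt_inv a); lra.
  - enough (th - e < t x) by lra.
    apply (cubic_defect_lt_inv a); lra.
Qed.

Definition kscale (ro m : R) : R := / (1 - 2 * m / ro).

Lemma kk_kscale (ro tau m : R) : kk ro tau m = tau * sqrt (kscale ro m).
Proof. unfold kk, kscale; rewrite sqrt_inv; reflexivity. Qed.

Lemma kscale_bounds (ro m : R) : 0 < ro -> m < 0 -> 0 < kscale ro m < 1.
Proof.
  intros Hro Hm; unfold kscale.
  assert (H : 1 < 1 - 2 * m / ro) by (unfold Rdiv; generalize (Rinv_0_lt_compat _ Hro); nra).
  split; [apply Rinv_0_lt_compat; lra | rewrite <- Rinv_1; apply Rinv_lt_contravar; lra].
Qed.

Lemma sqrt_kscale (ro m : R) : 0 < ro -> m < 0 ->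
  sqrt (-2 * m) * sqrt (kscale ro m) = sqrt ro * sqrt (1 - kscale ro m).
Proof.
  intros Hro Hm; destruct (kscale_bounds ro m Hro Hm) as [Hz0 Hz1].
  rewrite <- !sqrt_mult_alt by lra; f_equal.
  unfold kscale; field; split; [lra |].
  unfold Rdiv; generalize (Rinv_0_lt_compat _ Hro); nra.
Qed.

Lemma filterlim_kscale (ro : R) : 0 < ro ->
  filterlim (kscale ro) (Rbar_locally m_infty) (locally 0).
Proof.
  intros Hro; apply filterlim_locally; intros [eps Heps]; simpl.
  exists (- ro / (2 * eps)); intros m Hm.
  assert (Hm0 : m < 0) by (enough (0 < ro / (2 * eps)) by lra; apply Rdiv_lt_0_compat; lra).
  assert (Hz := kscale_bounds ro m Hro Hm0).
  change (Rabs (kscale ro m - 0) < eps); rewrite Rminus_0_r, Rabs_right by lra.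
  assert (Hlarge : ro < -2 * m * eps).
  { apply (Rmult_lt_compat_r (2 * eps)) in Hm; [| lra].
    replace (- ro / (2 * eps) * (2 * eps)) with (- ro) in Hm by (field; lra); lra. }
  replace (kscale ro m) with (ro / (ro - 2 * m)) by (unfold kscale; field; lra).
  apply (Rmult_lt_reg_r (ro - 2 * m)); [lra |].
  unfold Rdiv; rewrite Rmult_assoc, Rinv_l, Rmult_1_r by lra; nra.
Qed.

Lemma eventually_kk_lt (ro tau c : R) : 0 < ro -> 0 < tau -> 0 < c ->
  Rbar_locally m_infty (fun m => m < 0 /\ kk ro tau m ^ 2 < c).
Proof.
  intros Hro Htau Hc.
  assert (Hpos : 0 < c / tau ^ 2) by (apply Rdiv_lt_0_compat; [lra | apply pow_lt, Htau]).
  assert (Hneg : Rbar_locally m_infty (fun m => m < 0)) by (exists 0; tauto).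
  assert (Hsmall : Rbar_locally m_infty (fun m => kscale ro m < c / tau ^ 2))
    by exact (filterlim_kscale ro Hro _ (locally_open _ _ (open_lt _) (fun _ h => h) 0 Hpos)).
  generalize (filter_and _ _ Hneg Hsmall); apply filter_imp; intros m [Hm Hz]; split; [exact Hm |].
  rewrite kk_kscale, Rpow_mult_distr, pow2_sqrt by (generalize (kscale_bounds ro m Hro Hm); lra).
  apply (Rmult_lt_compat_l (tau ^ 2)) in Hz; [| apply pow_lt, Htau].
  replace (tau ^ 2 * (c / tau ^ 2)) with c in Hz by (field; lra); exact Hz.
Qed.

Lemma root_ratio_eq (alpha b A U : R) : 0 < alpha -> 0 < A -> 0 < U ->
  b - alpha / 2 * / A ^ 2 * U ^ 2 = 0 -> A = U * sqrt (alpha / (2 * b)).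
Proof.
  intros Ha HA HU Hb.
  replace (alpha / (2 * b)) with ((A / U) ^ 2).
  - rewrite sqrt_pow2; [field; lra | apply Rdiv_le_0_compat; lra].
  - replace b with (alpha / 2 * / A ^ 2 * U ^ 2) by lra; field; lra.
Qed.

Definition root_ratio (alpha beta tau z : R) : R := sqrt (alpha / (2 * (beta - tau ^ 2 * z))).
Definition main_coef (alpha beta tau z : R) : R :=
  3 * tau / 2 * root_ratio alpha beta tau z * sqrt (1 - z).
Definition slack_coef (alpha beta tau z : R) : R :=
  3 * tau / 2 * root_ratio alpha beta tau z * sqrt z.

Lemma cubic_bounds_at_root (ro tau alpha beta m : R) (u : R -> R) (A : R) :
  0 < ro -> 0 < tau -> 0 < alpha -> m < 0 -> is_um ro m u -> 0 < A ->
  beta - kk ro tau m ^ 2 - alpha / 2 * / A ^ 2 * u (A * kk ro tau m) ^ 2 = 0 ->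
  let z := kscale ro m in
  let t := sqrt (u (A * kk ro tau m)) / sqrt ro in
  cubic_squeeze (main_coef alpha beta tau z) (slack_coef alpha beta tau z) t /\
  u (A * kk ro tau m) = ro * t ^ 2 /\ A = ro * t ^ 2 * root_ratio alpha beta tau z.
Proof.
  intros Hro Htau Halpha Hm Hu HA Hroot z t.
  assert (Hz : 0 < z < 1) by (apply kscale_bounds; assumption).
  assert (Hsz : 0 < sqrt z) by (apply sqrt_lt_R0; lra).
  assert (Hk : kk ro tau m = tau * sqrt z) by apply kk_kscale.
  assert (Hk2 : kk ro tau m ^ 2 = tau ^ 2 * z)
    by (rewrite Hk, Rpow_mult_distr, pow2_sqrt by lra; reflexivity).
  assert (Hs : 0 < A * kk ro tau m) by (rewrite Hk; apply Rmult_lt_0_compat; nra).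
  set (s := A * kk ro tau m) in *; set (U := u s) in *.
  assert (HU : ro <= U) by (apply Hu; lra).
  set (r := sqrt ro) in *.
  assert (Hr : 0 < r) by (apply sqrt_lt_R0, Hro).
  assert (Hrr : r * r = ro) by (apply sqrt_sqrt; lra).
  assert (Hrt : sqrt U = r * t) by (unfold t; field; lra).
  assert (HUt : U = ro * t ^ 2)
    by (rewrite <- Hrr, <- (sqrt_sqrt U), Hrt by lra; ring).
  assert (Ht1 : 1 <= t).
  { enough (r * 1 <= r * t) by nra.
    rewrite <- Hrt, Rmult_1_r; apply sqrt_le_1_alt, HU. }
  assert (HAU : A = U * root_ratio alpha beta tau z)
    by (apply root_ratio_eq; [lra | lra | lra | rewrite <- Hk2; exact Hroot]).
  assert (Hcube := is_um_cube_bounds ro m u Hro Hm Hu s Hs).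
  fold U r in Hcube; rewrite Hrt in Hcube.
  assert (Hmain : sqrt (-2 * m) * s = 2 / 3 * r ^ 3 * (main_coef alpha beta tau z * t ^ 2)).
  { assert (Hid := sqrt_kscale ro m Hro Hm); fold z r in Hid.
    unfold s, main_coef; rewrite Hk, HAU, HUt, <- Hrr.
    transitivity (sqrt (-2 * m) * sqrt z * (r * r * t ^ 2 * root_ratio alpha beta tau z * tau));
      [ring | rewrite Hid; field]. }
  assert (Hslack : r * t * s = 2 / 3 * r ^ 3 * (slack_coef alpha beta tau z * t ^ 3)).
  { unfold s; rewrite Hk, HAU, HUt, <- Hrr; unfold slack_coef; field. }
  rewrite Rmult_plus_distr_r, Hmain, Hslack in Hcube.
  assert (Hr3 : 0 < 2 / 3 * r ^ 3) by (simpl; nra).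
  repeat split; [exact Ht1 | | | exact HUt | rewrite HAU, HUt; reflexivity];
    apply (Rmult_le_reg_l (2 / 3 * r ^ 3)); nra.
Qed.

Lemma eventually_cubic_bounds (ro tau alpha beta : R) (u : R -> R -> R) (Ao : R -> R) :
  0 < ro -> 0 < tau -> 0 < alpha -> 0 < beta ->
  (forall m, m < 0 -> is_um ro m (u m)) ->
  (forall m, m < 0 -> beta > (1 + alpha / 2) * kk ro tau m ^ 2 ->
     smallest_pos_root
       (fun A => beta - kk ro tau m ^ 2 - alpha / 2 * / A ^ 2 * u m (A * kk ro tau m) ^ 2)
       (Ao m)) ->
  Rbar_locally m_infty (fun m =>
    let z := kscale ro m in
    let t := sqrt (u m (Ao m * kk ro tau m)) / sqrt ro in
    cubic_squeeze (main_coef alpha beta tau z) (slack_coef alpha beta tau z) t /\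
    u m (Ao m * kk ro tau m) = ro * t ^ 2 /\ Ao m = ro * t ^ 2 * root_ratio alpha beta tau z).
Proof.
  intros Hro Htau Halpha Hbeta Hu HAo.
  assert (Hc : 0 < beta / (1 + alpha / 2)) by (apply Rdiv_lt_0_compat; lra).
  generalize (eventually_kk_lt ro tau _ Hro Htau Hc); apply filter_imp; intros m [Hm Hk].
  assert (Hadm : beta > (1 + alpha / 2) * kk ro tau m ^ 2).
  { apply (Rmult_lt_compat_l (1 + alpha / 2)) in Hk; [| lra].
    replace ((1 + alpha / 2) * (beta / (1 + alpha / 2))) with beta in Hk by (field; lra); lra. }
  destruct (HAo m Hm Hadm) as [HA [Hroot _]].
  exact (cubic_bounds_at_root ro tau alpha beta m (u m) (Ao m)
           Hro Htau Halpha Hm (Hu m Hm) HA Hroot).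
Qed.

Section Coefficients.

Variables (alpha beta tau : R).
Hypotheses (Halpha : 0 < alpha) (Hbeta : 0 < beta).

Lemma root_ratio_0 : root_ratio alpha beta tau 0 = sqrt (alpha / (2 * beta)).
Proof. unfold root_ratio; rewrite Rmult_0_r, Rminus_0_r; reflexivity. Qed.

Lemma continuity_pt_root_ratio : continuity_pt (root_ratio alpha beta tau) 0.
Proof.
  unfold root_ratio; reg; rewrite Rmult_0_r, Rminus_0_r; [lra |].
  apply Rdiv_le_0_compat; lra.
Qed.

Context {T : Type} {F : (T -> Prop) -> Prop} {FF : Filter F} (z : T -> R).
Hypothesis Hz : filterlim z F (locally 0).

Lemma filterlim_root_ratio :
  filterlim (fun x => root_ratio alpha beta tau (z x)) F (locally (sqrt (alpha / (2 * beta)))).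
Proof.
  rewrite <- root_ratio_0; eapply filterlim_comp; [exact Hz |].
  apply continuity_pt_filterlim, continuity_pt_root_ratio.
Qed.

Lemma filterlim_main_coef :
  filterlim (fun x => main_coef alpha beta tau (z x)) F
    (locally (3 * tau / 2 * sqrt (alpha / (2 * beta)))).
Proof.
  replace (3 * tau / 2 * sqrt (alpha / (2 * beta))) with (main_coef alpha beta tau 0)
    by (unfold main_coef; rewrite root_ratio_0, Rminus_0_r, sqrt_1; ring).
  eapply filterlim_comp; [exact Hz |].
  apply continuity_pt_filterlim; unfold main_coef.
  assert (Hratio := continuity_pt_root_ratio); reg; lra.
Qed.

Lemma filterlim_slack_coef : filterlim (fun x => slack_coef alpha beta tau (z x)) F (locally 0).
Proof.
  assert (H0 : slack_coef alpha beta tau 0 = 0) by (unfold slack_coef; rewrite sqrt_0; ring).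
  rewrite <- H0.
  eapply filterlim_comp; [exact Hz |].
  apply continuity_pt_filterlim; unfold slack_coef.
  assert (Hratio := continuity_pt_root_ratio); reg; lra.
Qed.

End Coefficients.

Lemma filterlim_m_infty_eps (g : R -> R) (l : R) :
  filterlim g (Rbar_locally m_infty) (locally l) ->
  forall eps, 0 < eps -> exists M, forall m, m < M -> Rabs (g m - l) < eps.
Proof.
  intros Hg eps Heps.
  destruct (proj1 (filterlim_locally _ _) Hg (mkposreal eps Heps)) as [M HM].
  exists M; exact HM.
Qed.

Theorem mainTheorem7
  (ro tau alpha beta : R) (u : R -> R -> R) (Ao : R -> R) (theta : R)
  (Hro : 0 < ro) (Htau : 0 < tau) (Halpha : 0 < alpha)
  (Hbeta : 0 < beta <= 1)
  (Hu : forall m, m < 0 -> is_um ro m (u m))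
  (HAo : forall m, m < 0 ->
     beta > (1 + alpha / 2) * (kk ro tau m) ^ 2 ->
     smallest_pos_root
       (fun A => beta - (kk ro tau m) ^ 2
                 - alpha / 2 * / A ^ 2 * (u m (A * kk ro tau m)) ^ 2)
       (Ao m))
  (Htheta_pos : 0 < theta)
  (Htheta : theta ^ 3 - 3 * tau / 2 * sqrt (alpha / (2 * beta)) * theta ^ 2 - 1 = 0) :
  (forall eps, 0 < eps -> exists M, forall m, m < M ->
     Rabs (Ao m - ro * theta ^ 2 * sqrt (alpha / (2 * beta))) < eps) /\
  (forall eps, 0 < eps -> exists M, forall m, m < M ->
     Rabs (u m (Ao m * kk ro tau m) - ro * theta ^ 2) < eps).
Proof.
  set (t := fun m => sqrt (u m (Ao m * kk ro tau m)) / sqrt ro).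
  assert (Hbounds := eventually_cubic_bounds ro tau alpha beta u Ao
                       Hro Htau Halpha (proj1 Hbeta) Hu HAo).
  assert (Hz := filterlim_kscale ro Hro).
  assert (Ht : filterlim t (Rbar_locally m_infty) (locally theta)).
  { apply (filterlim_cubic_root (3 * tau / 2 * sqrt (alpha / (2 * beta))) theta
             (fun m => main_coef alpha beta tau (kscale ro m))
             (fun m => slack_coef alpha beta tau (kscale ro m))).
    - generalize (sqrt_pos (alpha / (2 * beta))); nra.
    - exact Htheta_pos.
    - exact Htheta.
    - apply filterlim_main_coef; [lra | lra | exact Hz].
    - apply filterlim_slack_coef; [lra | lra | exact Hz].
    - generalize Hbounds; apply filter_imp; intros m Hm; apply Hm. }
  assert (HU : filterlim (fun m => ro * t m ^ 2) (Rbar_locally m_infty) (locally (ro * theta ^ 2))).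
  { apply (filterlim_comp _ _ _ t (fun x => ro * x ^ 2) _ (locally theta)); [exact Ht |].
    apply (continuity_pt_filterlim (fun x => ro * x ^ 2)); reg. }
  assert (HA := filterlim_comp_2 _ _ Rmult HU
    (filterlim_root_ratio alpha beta tau Halpha (proj1 Hbeta) _ Hz)
    (filterlim_mult (K := R_AbsRing) _ _)).
  split; apply filterlim_m_infty_eps;
    [refine (filterlim_ext_loc _ _ _ HA) | refine (filterlim_ext_loc _ _ _ HU)];
    generalize Hbounds; apply filter_imp; intros m Hm; symmetry; apply Hm.
Qed.
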